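(* For a positive integer $n$ let $p_n=\frac{\sqrt{1+4n}+1}{2\sqrt{1+4n}}$, $q_n=\frac{\sqrt{1+4n}-1}{2\sqrt{1+4n}}$, $x_n=\frac{1-\sqrt{1+4n}}{\sqrt{4n}}$, $y_n=\frac{1+\sqrt{1+4n}}{\sqrt{4n}}$, and $\mu_n=p_n\delta_{x_n}+q_n\delta_{y_n}$. Then, with $\mu=\mu_1$, one has $\mu_n=D_{1/\sqrt n}\,\mu^{\uplus n}$ for every $n\ge1$, and $L(\mu_n,\mathbf{b})\ge\frac{1}{6\sqrt n}$.
   Context: For a Borel probability measure $\mu$ on $\mathbb{R}$ and $a>0$, $D_a\mu(B)=\mu(a^{-1}B)$. The Cauchy transform is $G_\mu(z)=\int_{\mathbb{R}}\frac{1}{z-t}\,d\mu(t)$ for $z\in\mathbb{C}^+$, $F_\mu=1/G_\mu$, $K_\mu(z)=z-F_\mu(z)$. The Boolean convolution $\mu\uplus\nu$ is the unique probability measure with $K_{\mu\uplus\nu}=K_\mu+K_\nu$ on $\mathbb{C}^+$; $\mu^{\uplus n}$ is the $n$-fold Boolean convolution power. $\mathbf{b}=\frac12\delta_{-1}+\frac12\delta_1$. The Lévy distance between probability measures with distribution functions $F,G$ is $L=\inf\{\epsilon>0: F(x-\epsilon)-\epsilon\le G(x)\le F(x+\epsilon)+\epsilon\ \forall x\in\mathbb{R}\}$. *)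

From Stdlib Require Import Reals Lra List.
Import ListNotations.
Open Scope R_scope.

Record Cx := mkCx { Re : R ; Im : R }.
Definition Cplus (u v : Cx) : Cx := mkCx (Re u + Re v) (Im u + Im v).
Definition Cminus (u v : Cx) : Cx := mkCx (Re u - Re v) (Im u - Im v).
Definition Cmult (u v : Cx) : Cx :=
  mkCx (Re u * Re v - Im u * Im v) (Re u * Im v + Im u * Re v).
Definition Cinv (u : Cx) : Cx :=
  mkCx (Re u / (Re u ^ 2 + Im u ^ 2)) (- Im u / (Re u ^ 2 + Im u ^ 2)).
Definition RtoC (r : R) : Cx := mkCx r 0.
Definition C0 : Cx := RtoC 0.

(** A finitely supported Borel probability measure on R is represented as a
    list of (weight, atom) pairs:  sum_i w_i delta_{a_i}. *)
Definition dmeas := list (R * R).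

(** Cauchy transform G_mu(z) = int 1/(z-t) dmu(t) = sum_i w_i / (z - a_i). *)
Definition cauchyG (mu : dmeas) (z : Cx) : Cx :=
  fold_right (fun wa acc => Cplus (Cmult (RtoC (fst wa)) (Cinv (Cminus z (RtoC (snd wa))))) acc)
    C0 mu.
Definition Ftrans (mu : dmeas) (z : Cx) : Cx := Cinv (cauchyG mu z).
Definition Ktrans (mu : dmeas) (z : Cx) : Cx := Cminus z (Ftrans mu z).

(** Dilation D_a mu (B) = mu (a^{-1} B): the atom t is moved to a t. *)
Definition dilate (a : R) (mu : dmeas) : dmeas :=
  map (fun wa => (fst wa, a * snd wa)) mu.

Definition distr (mu : dmeas) (x : R) : R :=
  fold_right (fun wa acc => (if Rle_dec (snd wa) x then fst wa else 0) + acc) 0 mu.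

(** eps belongs to the set whose infimum is the Levy distance L(mu,nu). *)
Definition levy_admissible (mu nu : dmeas) (eps : R) : Prop :=
  eps > 0 /\
  forall x : R, distr mu (x - eps) - eps <= distr nu x /\ distr nu x <= distr mu (x + eps) + eps.

Definition bern : dmeas := [(1/2, -1); (1/2, 1)].

Definition s_n (n : nat) : R := sqrt (1 + 4 * INR n).
Definition p_n (n : nat) : R := (s_n n + 1) / (2 * s_n n).
Definition q_n (n : nat) : R := (s_n n - 1) / (2 * s_n n).
Definition x_n (n : nat) : R := (1 - s_n n) / sqrt (4 * INR n).
Definition y_n (n : nat) : R := (1 + s_n n) / sqrt (4 * INR n).
Definition mu_n (n : nat) : dmeas := [(p_n n, x_n n); (q_n n, y_n n)].

(* Dilating mu_n by sqrt n gives the two-atom measure with weights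
   (s +- 1)/(2s) at (1 -+ s)/2, where s = sqrt (1 + 4n).  A direct computation
   shows that its K-transform is ((s^2 - 1)/4) / (z - 1) = n / (z - 1), which is
   n times the K-transform 1 / (z - 1) of mu_1.
   For the Levy bound, mu_n has no mass below x_n, while b puts mass 1/2 at -1;
   testing admissibility at x = -1 forces eps >= min (x_n + 1, 1/2), and
   x_n + 1 >= 1/(6 sqrt n) because sqrt (1 + 4n) <= 2 sqrt n + 2/3. *)
From Stdlib Require Import Reals Lra List.
Import ListNotations.
Open Scope R_scope.

Definition two_atom (s : R) : dmeas :=
  [((s + 1) / (2 * s), (1 - s) / 2); ((s - 1) / (2 * s), (1 + s) / 2)].

Lemma Cmult_1_l (w : Cx) : Cmult (RtoC 1) w = w.
Proof. destruct w as [a b]; unfold Cmult, RtoC; cbn [Re Im]; f_equal; ring. Qed.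

Lemma Ktrans_two_atom (s : R) (z : Cx) : s > 0 -> Im z > 0 ->
  Ktrans (two_atom s) z = Cmult (RtoC ((s ^ 2 - 1) / 4)) (Cinv (Cminus z (RtoC 1))).
Proof.
  destruct z as [u v]; cbn [Im]; intros Hs Hv.
  set (c := (s ^ 2 - 1) / 4).
  (* G(z) = (z - 1) / (z^2 - z - c) with A + i B = z^2 - z - c, so G = (X + i Y) / N. *)
  set (A := u ^ 2 - v ^ 2 - u - c). set (B := v * (2 * u - 1)).
  set (X := (u - 1) * A + v * B). set (Y := v * A - (u - 1) * B).
  set (N := A ^ 2 + B ^ 2).
  assert (Hd1 : (u - (1 - s) / 2) ^ 2 + v ^ 2 > 0)
    by (pose proof (pow2_ge_0 (u - (1 - s) / 2)); nra).
  assert (Hd2 : (u - (1 + s) / 2) ^ 2 + v ^ 2 > 0)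
    by (pose proof (pow2_ge_0 (u - (1 + s) / 2)); nra).
  assert (HN : N = ((u - (1 - s) / 2) ^ 2 + v ^ 2) * ((u - (1 + s) / 2) ^ 2 + v ^ 2))
    by (unfold N, A, B, c; field).
  assert (HNpos : N > 0) by (rewrite HN; apply Rmult_lt_0_compat; lra).
  assert (HM : (u - 1) ^ 2 + v ^ 2 > 0) by (pose proof (pow2_ge_0 (u - 1)); nra).
  assert (HG : cauchyG (two_atom s) (mkCx u v) = mkCx (X / N) (Y / N)).
  { unfold cauchyG, two_atom, Cminus, Cinv, Cplus, Cmult, RtoC, C0;
      cbn [fold_right fst snd Re Im].
    rewrite !Rminus_0_r, !Rplus_0_r.
    f_equal; rewrite HN; unfold X, Y, A, B, c; field; repeat split; lra. }
  assert (HG2 : (X / N) ^ 2 + (Y / N) ^ 2 = ((u - 1) ^ 2 + v ^ 2) / N).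
  { replace ((X / N) ^ 2 + (Y / N) ^ 2) with ((X ^ 2 + Y ^ 2) / N ^ 2) by (field; lra).
    replace (X ^ 2 + Y ^ 2) with (((u - 1) ^ 2 + v ^ 2) * N) by (unfold X, Y, N; ring).
    field; lra. }
  unfold Ktrans, Ftrans; rewrite HG.
  unfold Cminus, Cinv, Cmult, RtoC; cbn [Re Im]; rewrite HG2.
  f_equal; [unfold X, A, B | unfold Y, A, B]; field; lra.
Qed.

Lemma sqrt_4_mul (r : R) : 0 <= r -> sqrt (4 * r) = 2 * sqrt r.
Proof.
  intros Hr. rewrite sqrt_mult by lra.
  replace 4 with (2 * 2) by ring. rewrite sqrt_square by lra. reflexivity.
Qed.

Lemma s_n_pos (n : nat) : s_n n > 0.
Proof. unfold s_n. apply sqrt_lt_R0. pose proof (pos_INR n). lra. Qed.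

Lemma s_n_sq (n : nat) : s_n n ^ 2 = 1 + 4 * INR n.
Proof. unfold s_n. rewrite <- Rsqr_pow2. apply Rsqr_sqrt. pose proof (pos_INR n). lra. Qed.

Lemma x_n_E (n : nat) : x_n n = (1 - s_n n) / (2 * sqrt (INR n)).
Proof. unfold x_n. rewrite sqrt_4_mul by apply pos_INR. reflexivity. Qed.

Lemma y_n_E (n : nat) : y_n n = (1 + s_n n) / (2 * sqrt (INR n)).
Proof. unfold y_n. rewrite sqrt_4_mul by apply pos_INR. reflexivity. Qed.

Lemma sqrt_INR_ge1 (n : nat) : (1 <= n)%nat -> 1 <= sqrt (INR n).
Proof.
  intros Hn. apply le_INR in Hn. rewrite <- sqrt_1. apply sqrt_le_1_alt. exact Hn.
Qed.

Lemma dilate_1 (mu : dmeas) : dilate 1 mu = mu.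
Proof.
  unfold dilate. rewrite <- (map_id mu) at 2. apply map_ext.
  intros [w a]; cbn [fst snd]. now rewrite Rmult_1_l.
Qed.

Lemma dilate_mu_n (n : nat) : (1 <= n)%nat ->
  dilate (sqrt (INR n)) (mu_n n) = two_atom (s_n n).
Proof.
  intros Hn. pose proof (sqrt_INR_ge1 n Hn).
  unfold dilate, mu_n, two_atom, p_n, q_n; rewrite x_n_E, y_n_E; cbn [map fst snd].
  f_equal; [|f_equal]; f_equal; field; lra.
Qed.

Lemma Ktrans_dilate_mu_n (n : nat) (z : Cx) : (1 <= n)%nat -> Im z > 0 ->
  Ktrans (dilate (sqrt (INR n)) (mu_n n)) z = Cmult (RtoC (INR n)) (Cinv (Cminus z (RtoC 1))).
Proof.
  intros Hn Hz. rewrite dilate_mu_n, Ktrans_two_atom by (apply s_n_pos || assumption).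
  rewrite s_n_sq. do 2 f_equal. field.
Qed.

Lemma Ktrans_mu_1 (z : Cx) : Im z > 0 -> Ktrans (mu_n 1) z = Cinv (Cminus z (RtoC 1)).
Proof.
  intros Hz. pose proof (Ktrans_dilate_mu_n 1 z (le_n 1) Hz) as H1.
  simpl INR in H1. rewrite sqrt_1, dilate_1, Cmult_1_l in H1. exact H1.
Qed.

Lemma distr_bern_neg1 : distr bern (-1) = 1 / 2.
Proof.
  unfold distr, bern; cbn [fold_right fst snd].
  destruct (Rle_dec (-1) (-1)); destruct (Rle_dec 1 (-1)); lra.
Qed.

Lemma levy_bern_lower (mu : dmeas) (a eps : R) :
  (forall x, x < a -> distr mu x = 0) ->
  levy_admissible mu bern eps -> eps >= Rmin (a + 1) (1 / 2).
Proof.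
  intros Hmu [Heps Hadm].
  destruct (Rlt_dec (-1 + eps) a) as [Hlt | Hge].
  - destruct (Hadm (-1)) as [_ Hup].
    rewrite distr_bern_neg1, Hmu in Hup by lra.
    pose proof (Rmin_r (a + 1) (1 / 2)); lra.
  - pose proof (Rmin_l (a + 1) (1 / 2)); lra.
Qed.

Lemma distr_mu_n_below (n : nat) (x : R) : (1 <= n)%nat ->
  x < x_n n -> distr (mu_n n) x = 0.
Proof.
  intros Hn Hx. pose proof (sqrt_INR_ge1 n Hn).
  assert (Hxy : x_n n < y_n n).
  { rewrite x_n_E, y_n_E. unfold Rdiv.
    apply Rmult_lt_compat_r; [apply Rinv_0_lt_compat; lra | pose proof (s_n_pos n); lra]. }
  unfold distr, mu_n; cbn [fold_right fst snd].
  destruct (Rle_dec (x_n n) x); destruct (Rle_dec (y_n n) x); lra.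
Qed.

Lemma x_n_add1_ge (n : nat) : (1 <= n)%nat -> 1 / (6 * sqrt (INR n)) <= x_n n + 1.
Proof.
  intros Hn. pose proof (sqrt_INR_ge1 n Hn) as Hr.
  assert (Hrr : sqrt (INR n) * sqrt (INR n) = INR n) by (apply sqrt_sqrt, pos_INR).
  pose proof (s_n_sq n). pose proof (s_n_pos n).
  assert (Hs : s_n n <= 2 * sqrt (INR n) + 2 / 3) by nra.
  rewrite x_n_E. apply (Rmult_le_reg_r (6 * sqrt (INR n))); [lra |].
  field_simplify; lra.
Qed.

Theorem mainTheorem6 : forall n : nat, (1 <= n)%nat ->
  (forall z : Cx, Im z > 0 ->
     Ktrans (dilate (sqrt (INR n)) (mu_n n)) z = Cmult (RtoC (INR n)) (Ktrans (mu_n 1) z))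
  /\
  (forall eps : R, levy_admissible (mu_n n) bern eps -> eps >= 1 / (6 * sqrt (INR n))).
Proof.
  intros n Hn. split.
  - intros z Hz. rewrite Ktrans_dilate_mu_n, Ktrans_mu_1 by assumption. reflexivity.
  - intros eps Hadm.
    pose proof (levy_bern_lower (mu_n n) (x_n n) eps
                  (fun x => distr_mu_n_below n x Hn) Hadm) as Hmin.
    assert (Hsmall : 1 / (6 * sqrt (INR n)) <= 1 / 2).
    { pose proof (sqrt_INR_ge1 n Hn).
      apply (Rmult_le_reg_r (6 * sqrt (INR n))); [lra |]. field_simplify; lra. }
    pose proof (x_n_add1_ge n Hn).
    unfold Rmin in Hmin; destruct (Rle_dec (x_n n + 1) (1 / 2)); lra.
Qed.
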